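(* The axiom systems $EL_{int}$ and $PAL_{int}$ are sound with respect to the class of all topo-models: every theorem of $EL_{int}$ and every theorem of $PAL_{int}$ is valid in every topo-model.
   Context: Fix a countable set $\mathit{Prop}$ of propositional variables and a finite non-empty set $\mathcal{A}$ of agents. $\mathcal{L}_{PAL_{int}}$: $\varphi ::= p \mid \neg\varphi \mid \varphi\wedge\varphi \mid K_i\varphi \mid \mathrm{int}(\varphi)\mid [\varphi]\varphi$; $\mathcal{L}_{EL_{int}}$ is its fragment without $[\cdot]$; $\bot:=p\wedge\neg p$. Topo-models: $(X,\tau)$ a topological space with interior operator $\mathrm{Int}$. A neighbourhood function set $\Phi$ is a set of partial functions $\theta$ from $X$ to functions $\mathcal{A}\to\tau$ such that for all $x,y\in Dom(\theta)$, $i\in\mathcal{A}$, $U\in\tau$: (1) $\theta(x)(i)\in\tau$; (2) $x\in\theta(x)(i)$; (3) $\theta(x)(i)\subseteq Dom(\theta)$; (4) $y\in\theta(x)(i)$ implies $\theta(x)(i)=\theta(y)(i)$; (5) $\theta|_U\in\Phi$, where $Dom(\theta|_U)=Dom(\theta)\cap U$, $\theta|_U(x)(i)=\theta(x)(i)\cap U$. A topo-model is $(X,\tau,\Phi,V)$ with $V(p)\subseteq X$. Neighbourhood situations are $(x,\theta)$, $\theta\in\Phi$, $x\in Dom(\theta)$. Semantics: $(x,\theta)\models p$ iff $x\in V(p)$; Booleans usual; $(x,\theta)\models K_i\varphi$ iff $(y,\theta)\models\varphi$ for all $y\in\theta(x)(i)$; $(x,\theta)\models\mathrm{int}(\varphi)$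 iff $x\in\mathrm{Int}([\![\varphi]\!]^\theta)$ with $[\![\varphi]\!]^\theta=\{y\in Dom(\theta)\mid(y,\theta)\models\varphi\}$; $(x,\theta)\models[\varphi]\psi$ iff $(x,\theta)\models\mathrm{int}(\varphi)$ implies $(x,\theta^\varphi)\models\psi$, with $\theta^\varphi=\theta|_{\mathrm{Int}([\![\varphi]\!]^\theta)}$. Validity = truth at all neighbourhood situations. $EL_{int}$: axioms: propositional tautologies; $K_i(\varphi\to\psi)\to(K_i\varphi\to K_i\psi)$; $K_i\varphi\to\varphi$; $K_i\varphi\to K_iK_i\varphi$; $\neg K_i\varphi\to K_i\neg K_i\varphi$; $\mathrm{int}(\varphi\to\psi)\to(\mathrm{int}(\varphi)\to\mathrm{int}(\psi))$; $\mathrm{int}(\varphi)\to\varphi$; $\mathrm{int}(\varphi)\to\mathrm{int}(\mathrm{int}(\varphi))$; $K_i\varphi\to\mathrm{int}(\varphi)$; rules: modus ponens, from $\varphi$ infer $K_i\varphi$, from $\varphi$ infer $\mathrm{int}(\varphi)$. $PAL_{int}$ adds the axioms (R1) $[\varphi]p\leftrightarrow(\mathrm{int}(\varphi)\to p)$; (R2) $[\varphi]\neg\psi\leftrightarrow(\mathrm{int}(\varphi)\to\neg[\varphi]\psi)$; (R3) $[\varphi](\psi\wedge\chi)\leftrightarrow[\varphi]\psi\wedge[\varphi]\chi$; (R4) $[\varphi]\mathrm{int}(\psi)\leftrightarrow(\mathrm{int}(\varphi)\to\mathrm{int}([\varphi]\psi))$; (R5) $[\varphi]K_i\psi\leftrightarrow(\mathrm{int}(\varphi)\to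 K_i[\varphi]\psi)$; (R6) $[\varphi][\psi]\chi\leftrightarrow[\neg[\varphi]\neg\mathrm{int}(\psi)]\chi$, and the rule from $\varphi$ infer $[\psi]\varphi$. *)

From HB Require Import structures.
From mathcomp Require Import all_boot all_order.
From mathcomp Require Import boolp classical_sets topology.
Set Implicit Arguments. Unset Strict Implicit. Unset Printing Implicit Defensive.
Local Open Scope classical_set_scope.

Section Syntax.
Variables (Prp : countType) (Ag : finType).

Inductive form : Type :=
| Var : Prp -> form
| Neg : form -> form
| And : form -> form -> form
| K : Ag -> form -> form
| Int : form -> form
| Ann : form -> form -> form.  (* Ann phi psi = [phi]psi *)

Definition Imp (a b : form) : form := Neg (And a (Neg b)).
Definition Iff (a b : form) : form := And (Imp a b) (Imp b a).

Fixpoint ann_free (f : form) : Prop :=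
  match f with
  | Var _ => True
  | Neg a => ann_free a
  | And a b => ann_free a /\ ann_free b
  | K _ a => ann_free a
  | Int a => ann_free a
  | Ann _ _ => False
  end.

(* propositional evaluation, treating non-Boolean subformulas as atoms *)
Fixpoint peval (v : form -> Prop) (f : form) : Prop :=
  match f with
  | Neg a => ~ peval v a
  | And a b => peval v a /\ peval v b
  | _ => v f
  end.

Definition taut (f : form) : Prop := forall v, peval v f.

Inductive ax_EL : form -> Prop :=
| ax_taut f : taut f -> ax_EL f
| ax_K i a b : ax_EL (Imp (K i (Imp a b)) (Imp (K i a) (K i b)))
| ax_T i a : ax_EL (Imp (K i a) a)
| ax_4 i a : ax_EL (Imp (K i a) (K i (K i a)))
| ax_5 i a : ax_EL (Imp (Neg (K i a)) (K i (Neg (K i a))))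
| ax_Kint a b : ax_EL (Imp (Int (Imp a b)) (Imp (Int a) (Int b)))
| ax_Tint a : ax_EL (Imp (Int a) a)
| ax_4int a : ax_EL (Imp (Int a) (Int (Int a)))
| ax_Kint_link i a : ax_EL (Imp (K i a) (Int a)).

Inductive ax_R : form -> Prop :=
| ax_R1 a p : ax_R (Iff (Ann a (Var p)) (Imp (Int a) (Var p)))
| ax_R2 a b : ax_R (Iff (Ann a (Neg b)) (Imp (Int a) (Neg (Ann a b))))
| ax_R3 a b c : ax_R (Iff (Ann a (And b c)) (And (Ann a b) (Ann a c)))
| ax_R4 a b : ax_R (Iff (Ann a (Int b)) (Imp (Int a) (Int (Ann a b))))
| ax_R5 i a b : ax_R (Iff (Ann a (K i b)) (Imp (Int a) (K i (Ann a b))))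
| ax_R6 a b c :
    ax_R (Iff (Ann a (Ann b c)) (Ann (Neg (Ann a (Neg (Int b)))) c)).

Inductive EL_thm : form -> Prop :=
| EL_ax f : ax_EL f -> ann_free f -> EL_thm f
| EL_mp a b : EL_thm a -> EL_thm (Imp a b) -> EL_thm b
| EL_necK i a : EL_thm a -> EL_thm (K i a)
| EL_necInt a : EL_thm a -> EL_thm (Int a).

Inductive PAL_thm : form -> Prop :=
| PAL_ax f : ax_EL f -> PAL_thm f
| PAL_red f : ax_R f -> PAL_thm f
| PAL_mp a b : PAL_thm a -> PAL_thm (Imp a b) -> PAL_thm b
| PAL_necK i a : PAL_thm a -> PAL_thm (K i a)
| PAL_necInt a : PAL_thm a -> PAL_thm (Int a)
| PAL_necAnn b a : PAL_thm a -> PAL_thm (Ann b a).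

End Syntax.

Section Semantics.
Variables (Prp : countType) (Ag : finType) (X : topologicalType).

(* partial functions from X to (Ag -> set X); None = outside the domain *)
Definition nbfun := X -> option (Ag -> set X).

Definition Dom (th : nbfun) : set X := [set x | th x <> None].

Definition restr (th : nbfun) (U : set X) : nbfun :=
  fun x => if `[< U x >] then
             match th x with
             | Some g => Some (fun i => g i `&` U)
             | None => None
             end
           else None.

Definition nbfun_set_ax (Phi : set nbfun) : Prop :=
  forall th, Phi th ->
    (forall x g, th x = Some g -> forall i,
        open (g i)                                           (* (1) *)
        /\ g i x                                             (* (2) *)
        /\ g i `<=` Dom th                                   (* (3) *)
        /\ (forall y h, th y = Some h -> g i y -> g i = h i)) (* (4) *)
    /\ (forall U, open U -> Phi (restr th U)).                 (* (5) *)

Record topo_model := TopoModel {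
  tm_Phi : set nbfun;
  tm_Phi_ax : nbfun_set_ax tm_Phi;
  tm_V : Prp -> set X
}.

Variable M : topo_model.

Fixpoint sat (f : form Prp Ag) (th : nbfun) (x : X) : Prop :=
  match f with
  | Var p => tm_V M p x
  | Neg a => ~ sat a th x
  | And a b => sat a th x /\ sat b th x
  | K i a => forall g, th x = Some g -> forall y, g i y -> sat a th y
  | Int a => interior [set y | Dom th y /\ sat a th y] x
  | Ann a b =>
      interior [set y | Dom th y /\ sat a th y] x ->
      sat b (restr th (interior [set y | Dom th y /\ sat a th y])) x
  end.

Definition valid (f : form Prp Ag) : Prop :=
  forall th x, tm_Phi M th -> Dom th x -> sat f th x.

End Semantics.

From Pilot Require Import Defs.
From mathcomp Require Import all_boot all_order.
From mathcomp Require Import boolp classical_sets topology.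
Set Implicit Arguments. Unset Strict Implicit. Unset Printing Implicit Defensive.
Local Open Scope classical_set_scope.

(* The S5 axioms for [K_i] follow from conditions (2)-(4) on neighbourhood
   functions, the S4 axioms for [int] from the interior operator, and
   [K_i a -> int a] from the openness (1) of neighbourhoods.  Announcing [a]
   restricts [theta] to the open set [Int [[a]]]; R1-R5 just unfold this
   restriction, and R6 holds because restricting to [U] and then to some
   [V <= U] is restricting to [V].  Condition (5) keeps restrictions in [Phi],
   which validates necessitation for announcements, while necessitation for
   [int] needs the domain of [theta] to be open, which follows from (1) and (3)
   as soon as there is an agent. *)

Section Soundness.
Variables (Prp : countType) (Ag : finType) (X : topologicalType)
  (M : topo_model Prp Ag X).

Local Notation sat := (Defs.sat M).
Local Notation Dom := (@Defs.Dom Ag X).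
Local Notation restr := (@Defs.restr Ag X).
Local Notation ext th a := [set y | Dom th y /\ sat a th y].

Lemma sat_Imp a b th x : sat (Imp a b) th x <-> (sat a th x -> sat b th x).
Proof. by split=> /= [H Ha|H [/H]//]; apply: contrapT => Hb; apply: H. Qed.

Lemma sat_Iff a b th x : (sat a th x <-> sat b th x) -> sat (Iff a b) th x.
Proof. by move=> /= H; tauto. Qed.

Lemma peval_sat f th x : peval (fun g => sat g th x) f <-> sat f th x.
Proof. by elim: f => //= [a IH|a IHa b IHb]; rewrite ?IH ?IHa ?IHb. Qed.

Lemma open_sub_interior (O A : set X) : open O -> O `<=` A -> O `<=` A°.
Proof. by move=> oO; rewrite (open_subsetE _ oO). Qed.

Lemma interior_ext_sub_Dom th a : (ext th a)° `<=` Dom th.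
Proof. by move=> y /interior_subset []. Qed.

Lemma Dom_restr th U y : Dom (restr th U) y <-> U y /\ Dom th y.
Proof.
rewrite /Dom /restr /=; have [Uy|nUy] := pselect (U y).
  by rewrite asboolT //; case: (th y) => [g|]; split=> //; case.
by rewrite asboolF //; split=> //; case.
Qed.

Lemma restr_Some th U y g : U y -> th y = Some g ->
  restr th U y = Some (fun i => g i `&` U).
Proof. by move=> Uy E; rewrite /restr asboolT // E. Qed.

Lemma restr_SomeP th U y g' : restr th U y = Some g' ->
  U y /\ exists2 g, th y = Some g & g' = (fun i => g i `&` U).
Proof.
rewrite /restr; have [Uy|nUy] := pselect (U y); last by rewrite asboolF.
by rewrite asboolT //; case: (th y) => [g|] // [<-]; split=> //; exists g.
Qed.

Lemma restr_restr th U V : V `<=` U -> restr (restr th U) V = restr th V.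
Proof.
move=> VU; apply: funext => y; rewrite /restr.
have [Vy|nVy] := pselect (V y); last by rewrite !asboolF.
rewrite !asboolT //; last exact: VU.
case: (th y) => // g; congr Some; apply: funext => i.
by rewrite -setIA (setIidr VU).
Qed.

Section NeighbourhoodFunction.
Variables (th : nbfun Ag X) (x : X) (g : Ag -> set X).
Hypotheses (th_Phi : tm_Phi M th) (th_x : th x = Some g).

Lemma nb_open i : open (g i).
Proof. by have [/(_ _ _ th_x i) []] := tm_Phi_ax th_Phi. Qed.

Lemma nb_center i : g i x.
Proof. by have [/(_ _ _ th_x i) [_ []]] := tm_Phi_ax th_Phi. Qed.

Lemma nb_sub_Dom i : g i `<=` Dom th.
Proof. by have [/(_ _ _ th_x i) [_ [_ []]]] := tm_Phi_ax th_Phi. Qed.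

Lemma nb_coherent i y h : th y = Some h -> g i y -> g i = h i.
Proof.
by have [/(_ _ _ th_x i) [_ [_ [_ coh]]] _] := tm_Phi_ax th_Phi; exact: coh.
Qed.

Lemma nb_sub_interior i a : (forall y, g i y -> sat a th y) -> (ext th a)° x.
Proof.
move=> ga; apply: (open_sub_interior (nb_open i)) (nb_center i) => y gy.
by split; [exact: nb_sub_Dom gy|exact: ga].
Qed.

End NeighbourhoodFunction.

Arguments nb_center {th x g} th_Phi th_x i.
Arguments nb_sub_Dom {th x g} th_Phi th_x i [t].

Lemma restr_Phi th U : tm_Phi M th -> open U -> tm_Phi M (restr th U).
Proof. by move=> /tm_Phi_ax [_]; apply. Qed.

Lemma Dom_open_at (i : Ag) th x : tm_Phi M th -> Dom th x -> (Dom th)° x.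
Proof.
move=> th_Phi; case E: (th x) => [g|] // _.
exact: open_sub_interior (nb_open th_Phi E i) (nb_sub_Dom th_Phi E i) _
  (nb_center th_Phi E i).
Qed.

Section EpistemicSchemas.
Variables (th : nbfun Ag X) (x : X).
Hypotheses (th_Phi : tm_Phi M th) (Dom_x : Dom th x).

Lemma sat_axK i a b : sat (Imp (K i (Imp a b)) (Imp (K i a) (K i b))) th x.
Proof.
apply/sat_Imp => Hab; apply/sat_Imp => Ha g E y gy.
by apply/sat_Imp: (Ha g E y gy); exact: Hab g E y gy.
Qed.

Lemma sat_axT i a : sat (Imp (K i a) a) th x.
Proof.
apply/sat_Imp => Ha; case E: (th x) Dom_x => [g|] // _.
exact: Ha E x (nb_center th_Phi E i).
Qed.

Lemma sat_ax4 i a : sat (Imp (K i a) (K i (K i a))) th x.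
Proof.
apply/sat_Imp => Ha g E y gy h Ey z hz.
by apply: (Ha _ E z); rewrite (nb_coherent th_Phi E Ey gy).
Qed.

Lemma sat_ax5 i a : sat (Imp (Neg (K i a)) (K i (Neg (K i a)))) th x.
Proof.
apply/sat_Imp => /= nKa g E y gy Ky; apply: nKa => g'; rewrite E => -[<-] z gz.
case Ey: (th y) (nb_sub_Dom th_Phi E i gy) => [h|] // _.
by apply: (Ky h Ey z); rewrite -(nb_coherent th_Phi E Ey gy).
Qed.

Lemma sat_axKint a b : sat (Imp (Int (Imp a b)) (Imp (Int a) (Int b))) th x.
Proof.
apply/sat_Imp => Hab; apply/sat_Imp => Ha.
have : (ext th (Imp a b) `&` ext th a)° x by rewrite interiorI; split.
by apply: interiorS => y [[Dy /sat_Imp ab] [_ /ab]].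
Qed.

Lemma sat_axTint a : sat (Imp (Int a) a) th x.
Proof. by apply/sat_Imp => /interior_subset []. Qed.

Lemma sat_ax4int a : sat (Imp (Int a) (Int (Int a))) th x.
Proof.
apply/sat_Imp => /= /(open_sub_interior (@open_interior _ _)); apply => y ay.
by split=> //; exact: interior_ext_sub_Dom ay.
Qed.

Lemma sat_axKint_link i a : sat (Imp (K i a) (Int a)) th x.
Proof.
apply/sat_Imp => /= Ka; case E: (th x) Dom_x => [g|] // _.
exact: (nb_sub_interior th_Phi E (Ka g E)).
Qed.

End EpistemicSchemas.

Lemma ax_EL_valid f : ax_EL f -> valid M f.
Proof.
move=> Hf th x th_Phi Dom_x; case: Hf => [f' f'_taut||||||||].
- exact/peval_sat/f'_taut.
- exact: sat_axK.
- exact: sat_axT.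
- exact: sat_ax4.
- exact: sat_ax5.
- exact: sat_axKint.
- exact: sat_axTint.
- exact: sat_ax4int.
- exact: sat_axKint_link.
Qed.

Section ReductionSchemas.
Variables (th : nbfun Ag X) (x : X) (a : form Prp Ag).
Local Notation U := (ext th a)°.

Lemma sat_R1 p : sat (Iff (Ann a (Var Ag p)) (Imp (Int a) (Var Ag p))) th x.
Proof. by apply: sat_Iff; rewrite sat_Imp. Qed.

Lemma sat_R2 b : sat (Iff (Ann a (Neg b)) (Imp (Int a) (Neg (Ann a b)))) th x.
Proof.
apply: sat_Iff; rewrite sat_Imp /=.
by split=> H Ux; [move/(_ Ux); exact: H|move=> Hb; exact: H Ux (fun=> Hb)].
Qed.

Lemma sat_R3 b c : sat (Iff (Ann a (And b c)) (And (Ann a b) (Ann a c))) th x.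
Proof. by apply: sat_Iff => /=; tauto. Qed.

Lemma sat_R4 b : sat (Iff (Ann a (Int b)) (Imp (Int a) (Int (Ann a b)))) th x.
Proof.
apply: sat_Iff; rewrite sat_Imp /=; split=> H Ux.
  by apply: interiorS (H Ux) => y [/Dom_restr [_ Dy] Hb]; split=> // _.
have : (U `&` (ext th (Ann a b))°) x by split=> //; exact: H.
apply: open_sub_interior.
  exact: openI (@open_interior _ _) (@open_interior _ _).
move=> y [Uy /interior_subset [Dy Hb]].
by split; [exact/Dom_restr|exact: Hb].
Qed.

Lemma sat_R5 i b : sat (Iff (Ann a (K i b)) (Imp (Int a) (K i (Ann a b)))) th x.
Proof.
apply: sat_Iff; rewrite sat_Imp /=; split=> H Ux.
  by move=> g E y gy Uy; exact: H Ux _ (restr_Some Ux E) y (conj gy Uy).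
by move=> _ /restr_SomeP [_ [g E ->]] y [gy Uy]; exact: H Ux g E y gy Uy.
Qed.

Lemma sat_R6 b c :
  sat (Iff (Ann a (Ann b c)) (Ann (Neg (Ann a (Neg (Int b)))) c)) th x.
Proof.
apply: sat_Iff.
set th' := restr th U; set U' := (ext th' b)°.
have U'U : U' `<=` U by move=> y /interior_ext_sub_Dom /Dom_restr [].
have ext_ab : ext th (Neg (Ann a (Neg (Int b)))) = U'.
  apply/seteqP; split=> y /=.
    by move=> [_ H]; apply: contrapT => nU'y; apply: H.
  move=> U'y; split; first exact/interior_ext_sub_Dom/U'U.
  by move/(_ (U'U _ U'y)).
rewrite /= -/th' -/U' ext_ab ((interior_id _).1 (@open_interior _ _)).
rewrite restr_restr //.
by split=> [H U'x|H _]; [exact: H (U'U _ U'x) U'x|exact: H].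
Qed.

End ReductionSchemas.

Lemma ax_R_valid f : ax_R f -> valid M f.
Proof.
move=> Hf th x _ _; case: Hf => *.
- exact: sat_R1.
- exact: sat_R2.
- exact: sat_R3.
- exact: sat_R4.
- exact: sat_R5.
- exact: sat_R6.
Qed.

Lemma valid_mp a b : valid M a -> valid M (Imp a b) -> valid M b.
Proof.
by move=> Ha Hab th x th_Phi Dx; apply/sat_Imp: (Ha th x th_Phi Dx); exact: Hab.
Qed.

Lemma valid_necK i a : valid M a -> valid M (K i a).
Proof.
move=> Ha th x th_Phi _ g E y gy; apply: Ha => //.
exact: nb_sub_Dom th_Phi E i _ gy.
Qed.

Lemma valid_necInt (i : Ag) a : valid M a -> valid M (Int a).
Proof.
move=> Ha th x th_Phi /(Dom_open_at i th_Phi); apply: interiorS => y Dy.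
by split=> //; exact: Ha.
Qed.

Lemma valid_necAnn b a : valid M a -> valid M (Ann b a).
Proof.
move=> Ha th x th_Phi Dx Ux; apply: Ha; last exact/Dom_restr.
exact: restr_Phi th_Phi (@open_interior _ _).
Qed.

Lemma PAL_thm_valid (i : Ag) f : PAL_thm f -> valid M f.
Proof.
elim=> {f} [f /ax_EL_valid|f /ax_R_valid|a b _ Ha _|j a _|a _|b a _] //.
- exact: valid_mp.
- exact: valid_necK.
- exact: valid_necInt.
- exact: valid_necAnn.
Qed.

End Soundness.

Lemma EL_thm_PAL_thm (Prp : countType) (Ag : finType) (f : form Prp Ag) :
  EL_thm f -> PAL_thm f.
Proof.
elim=> {f} [f /PAL_ax //|a b _ Ha _|i a _|a _]; first exact: PAL_mp.
- exact: PAL_necK.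
- exact: PAL_necInt.
Qed.

Theorem mainTheorem5 (Prp : countType) (Ag : finType) (hAg : 0 < #|Ag|)
  (X : topologicalType) (M : topo_model Prp Ag X) :
  (forall f : form Prp Ag, EL_thm f -> valid M f) /\
  (forall f : form Prp Ag, PAL_thm f -> valid M f).
Proof.
have [i _] := card_gt0P hAg.
by split=> f => [/EL_thm_PAL_thm|]; exact: PAL_thm_valid i f.
Qed.
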